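(* In the nonperishable, zero-lead-time, stationary-demand setting described in the context, let $\mathcal F$ be a hypothesis class satisfying the stated conditions (uniformly bounded, closed under pointwise convergence, and closed under the fix-and-shift transformation), and let $\mathcal F'$ be the associated constrained class. Then $$\inf_{f\in\mathcal F'}\big[\mathcal R(f)-\mathcal R(g^* )\big]=\inf_{f\in\mathcal F}\big[\mathcal R(f)-\mathcal R(g^* )\big] \quad\text{and}\quad \sup_{f\in\mathcal F'}\big|\mathcal R(f)-\hat{\mathcal R}_n(f)\big|\le\sup_{f\in\mathcal F}\big|\mathcal R(f)-\hat{\mathcal R}_n(f)\big|.$$
   Context: Setting: a multi-period inventory system with nonperishable product, zero lead time and backordering; the inventory state at an ordering time is a scalar $z\in\mathbb R$. Demand is $D=f^D(\bm X)+\epsilon$ with feature $\bm X\in\mathbb R^p$, where $(\bm X_t,\epsilon_t)$ are i.i.d. over time and $D\in[0,\bar D]$. Because $z$ is determined by past demands, $z$ is independent of the current $(\bm X,D)$. A policy is a map $f:\mathbb R^p\times\mathbb R\to\mathbb R$ (negative values allowed) giving the order quantity. For unit costs $b,h>0$, the loss is $\ell(f(\bm x,z),d)=b\,[d-f(\bm x,z)-z]^++h\,[f(\bm x,z)+z-d]^+$, the population risk is $\mathcal R(f)=\mathbb E_{\bm X,z,D}[\ell(f(\bm X,z),D)]$, and $g^*$ is a minimizer of $\mathcal R$ over all measurable functions. Given $n$ samples $\{(\bm x_i,z_i,d_i)\}_{i=1}^n$, the empirical risk is $\hat{\mathcal R}_n(f)=\frac1n\sum_{i=1}^n\ell(f(\bm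 x_i,z_i),d_i)$. The hypothesis class $\mathcal F$ of functions $\mathbb R^p\times\mathbb R\to\mathbb R$ satisfies: $\|f\|_\infty\le Q$ for all $f\in\mathcal F$ and some constant $Q>0$; $\mathcal F$ is closed under pointwise convergence (hence compact); and (fix-and-shift closure) for every $f\in\mathcal F$ and $c\in\mathbb R$, the function $f_c(\bm x,z)=f(\bm x,c)+c-z$ belongs to $\mathcal F$. Define $\mathcal V=\{v:\mathbb R^p\to\mathbb R\mid \exists f\in\mathcal F \text{ with } f(\bm x,z)=v(\bm x)-z\ \forall(\bm x,z)\}$ and the constrained class $\mathcal F'=\{f:\mathbb R^p\times\mathbb R\to\mathbb R\mid f(\bm x,z)=v(\bm x)-z\ \forall(\bm x,z),\ v\in\mathcal V\}$. *)

From HB Require Import structures.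
From mathcomp Require Import all_boot all_order all_algebra.
From mathcomp Require Import all_classical all_reals all_analysis.
Set Implicit Arguments. Unset Strict Implicit. Unset Printing Implicit Defensive.
Import Order.TTheory GRing.Theory Num.Theory.
Local Open Scope classical_set_scope.
Local Open Scope ring_scope.

(* Newsvendor-type loss  l(q, d) = b [d - q - z]^+ + h [q + z - d]^+
   where q = f(x,z) is the order quantity and z the inventory state. *)
Definition loss (R : realType) (b h q z d : R) : R :=
  b * Num.max (d - q - z) 0 + h * Num.max (q + z - d) 0.

(* PXD is the joint law of (X, D) on X * R, Pz the law of
   the inventory state z on R; independence of z and (X, D) is encoded by
   taking the joint law of ((X, D), z) to be the product measure PXD \x Pz. *)
Definition risk (R : realType) (dX : measure_display) (X : measurableType dX)
  (PXD : probability (X * R)%type R) (Pz : probability R R) (b h : R)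
  (f : X * R -> R) : \bar R :=
  (\int[(PXD \x Pz)%E]_w (loss b h (f (w.1.1, w.2)) w.2 w.1.2)%:E)%E.

Definition emp_risk (R : realType) (X : Type) (b h : R) (n : nat)
  (xs : 'I_n -> X) (zs ds : 'I_n -> R) (f : X * R -> R) : R :=
  n%:R^-1 * \sum_(i < n) loss b h (f (xs i, zs i)) (zs i) (ds i).

Definition Vset (R : realType) (X : Type) (F : set (X * R -> R)) : set (X -> R) :=
  [set v | exists2 f, F f & forall x z, f (x, z) = v x - z].

Definition Fprime (R : realType) (X : Type) (F : set (X * R -> R)) : set (X * R -> R) :=
  [set f | exists2 v, Vset F v & forall x z, f (x, z) = v x - z].

From HB Require Import structures.
From mathcomp Require Import all_boot all_order all_algebra.
From mathcomp Require Import all_classical all_reals all_analysis.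
Import Order.TTheory GRing.Theory Num.Theory.
Import numFieldNormedType.Exports.
From mathcomp Require Import measurable_realfun ring.
Local Open Scope classical_set_scope.
Local Open Scope ring_scope.

(** The loss depends on the order quantity and the state only through the
    post-order inventory level [f(x, z) + z], so at every state the
    fix-and-shift policy [f_c] incurs the loss [f] incurs at state [c]; its risk
    is the section risk of [f] at [c].  By independence of [z] and [(X, D)] and
    Fubini, the risk of [f] is the [Pz]-average of its section risks, so some
    [c] has section risk at most [R(f) + e].  As [f_c] lies in [F'], the
    infimum over [F'] is no larger than the one over [F]; the reverse
    inequality and the bound on the suprema hold because [F' ⊆ F]. *)

Definition fix_shift {R : realType} {X : Type} (f : X * R -> R) (c : R) :
    X * R -> R :=
  fun w => f (w.1, c) + c - w.2.

Lemma Fprime_sub {R : realType} {X : Type} (F : set (X * R -> R)) :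
  Fprime F `<=` F.
Proof.
move=> f [v [g Fg gE] fE].
suff -> : f = g by [].
by apply/funext => -[x z]; rewrite fE gE.
Qed.

Lemma fix_shift_Fprime {R : realType} {X : Type} (F : set (X * R -> R))
    (f : X * R -> R) (c : R) :
  (forall g c, F g -> F (fix_shift g c)) -> F f -> Fprime F (fix_shift f c).
Proof.
move=> F_shift Ff; exists (fun x => f (x, c) + c); last by move=> x z.
by exists (fix_shift f c) => //; exact: F_shift.
Qed.

Lemma probability_exists_le_integralD {d} {T : measurableType d} {R : realType}
    (P : probability T R) {phi : T -> \bar R} {e : R} :
  measurable_fun setT phi -> (forall t, 0 <= phi t)%E -> 0 < e ->
  exists t, (phi t <= \int[P]_x phi x + e%:E)%E.
Proof.
move=> mphi phi_ge0 e_gt0; apply: contrapT => /forallNP phi_gt.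
have {}phi_gt t : (\int[P]_x phi x + e%:E < phi t)%E.
  by rewrite ltNge; apply/negP; exact: phi_gt.
have int_ge0 : (0 <= \int[P]_x phi x)%E by exact: integral_ge0.
have : (\int[P]_x phi x + e%:E <= \int[P]_x phi x)%E.
  rewrite -[leLHS]mule1 -(probability_setT P) -integral_cst //.
  apply: ge0_le_integral => //.
  - by move=> t _; rewrite adde_ge0 // lee_fin ltW.
  - by move=> t _; exact: ltW.
move: phi_gt int_ge0; case: (\int[P]_x phi x)%E => [r _ _ | /(_ point) | //].
- by rewrite -EFinD lee_fin gerDl leNgt e_gt0.
- by rewrite /= ltNge leey.
Qed.

Section fix_shift_risk.
Context {R : realType} {dX : measure_display} {X : measurableType dX}.
Variables (PXD : probability (X * R)%type R) (Pz : probability R R).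
Context {b h : R} (b_ge0 : 0 <= b) (h_ge0 : 0 <= h).

Lemma loss_ge0 q z d : 0 <= loss b h q z d.
Proof.
by rewrite /loss addr_ge0 // mulr_ge0 // le_max lexx orbT.
Qed.

Lemma loss_fix_shift q c z d : loss b h (q + c - z) z d = loss b h q c d.
Proof. by rewrite /loss; congr (b * Num.max _ 0 + h * Num.max _ 0); ring. Qed.

Let pointwise_loss (f : X * R -> R) (w : (X * R) * R) : \bar R :=
  (loss b h (f (w.1.1, w.2)) w.2 w.1.2)%:E.

Let pointwise_loss_ge0 f w : (0 <= pointwise_loss f w)%E.
Proof. by rewrite lee_fin loss_ge0. Qed.

Let measurable_pointwise_loss f :
  measurable_fun setT f -> measurable_fun setT (pointwise_loss f).
Proof.
move=> mf; apply/measurable_EFinP.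
have mfz : measurable_fun setT (fun w : (X * R) * R => f (w.1.1, w.2)).
  by apply: measurableT_comp => //; apply: measurable_fun_pair => //;
    exact: measurableT_comp.
have md : measurable_fun setT (fun w : (X * R) * R => w.1.2).
  exact: measurableT_comp.
apply: measurable_funD; apply: measurable_funM => //;
  apply: measurable_maxr => //; apply: measurable_funB => //.
- exact: measurable_funB.
- exact: measurable_funD.
Qed.

Definition section_risk (f : X * R -> R) (c : R) : \bar R :=
  (\int[PXD]_w (loss b h (f (w.1, c)) c w.2)%:E)%E.

Lemma risk_section f : measurable_fun setT f ->
  risk PXD Pz b h f = (\int[Pz]_c section_risk f c)%E.
Proof.
move=> mf; rewrite /risk.
by rewrite (fubini_tonelli2 _ (measurable_pointwise_loss f mf)
  (pointwise_loss_ge0 f)).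
Qed.

Lemma measurable_section_risk f :
  measurable_fun setT f -> measurable_fun setT (section_risk f).
Proof.
move=> mf; exact: (measurable_fun_fubini_tonelli_G _
  (measurable_pointwise_loss f mf) (pointwise_loss_ge0 f)).
Qed.

Lemma risk_fix_shift f c : measurable_fun setT f ->
  risk PXD Pz b h (fix_shift f c) = section_risk f c.
Proof.
move=> mf; rewrite /risk.
under eq_integral do rewrite /fix_shift /= loss_fix_shift.
have mfc : measurable_fun setT
    (fun w : (X * R) * R => pointwise_loss f (w.1, c)).
  apply: measurableT_comp; first exact: measurable_pointwise_loss.
  by apply: measurable_fun_pair => //; exact: measurable_cst.
rewrite (fubini_tonelli2 _ mfc (fun w => pointwise_loss_ge0 f (w.1, c))).
rewrite -[RHS]mule1 -(probability_setT Pz) -integral_cst //.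
Qed.

Lemma exists_risk_fix_shift_le f e : measurable_fun setT f -> 0 < e ->
  exists c, (risk PXD Pz b h (fix_shift f c) <= risk PXD Pz b h f + e%:E)%E.
Proof.
move=> mf e_gt0.
have section_risk_ge0 c : (0 <= section_risk f c)%E.
  by apply: integral_ge0 => w _; rewrite lee_fin loss_ge0.
have [c le_c] := probability_exists_le_integralD Pz
  (measurable_section_risk f mf) section_risk_ge0 e_gt0.
by exists c; rewrite risk_fix_shift // risk_section.
Qed.

End fix_shift_risk.

Theorem proposition2
  (R : realType) (dX : measure_display) (X : measurableType dX)
  (PXD : probability (X * R)%type R) (Pz : probability R R)
  (Dbar : R) (hD : PXD [set w | 0 <= w.2 <= Dbar] = 1%E)
  (b h : R) (hb : 0 < b) (hh : 0 < h)
  (gs : X * R -> R) (gs_meas : measurable_fun setT gs)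
  (gs_min : forall g : X * R -> R, measurable_fun setT g ->
     (risk PXD Pz b h gs <= risk PXD Pz b h g)%E)
  (F : set (X * R -> R)) (Q : R) (hQ : 0 < Q)
  (F_meas : forall f, F f -> measurable_fun setT f)
  (F_bdd : forall f, F f ->
     {ae (PXD \x Pz)%E, forall w, `|f (w.1.1, w.2)| <= Q})
  (F_closed : forall (u : nat -> X * R -> R) (g : X * R -> R),
     (forall k, F (u k)) -> (forall w, (fun k => u k w) @ \oo --> g w) -> F g)
  (F_shift : forall f c, F f -> F (fun w => f (w.1, c) + c - w.2))
  (n : nat) (xs : 'I_n -> X) (zs ds : 'I_n -> R) :
  ereal_inf [set (risk PXD Pz b h f - risk PXD Pz b h gs)%E | f in Fprime F]
    = ereal_inf [set (risk PXD Pz b h f - risk PXD Pz b h gs)%E | f in F]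
  /\
  (ereal_sup [set `|risk PXD Pz b h f - (emp_risk b h xs zs ds f)%:E|%E
                 | f in Fprime F]
   <= ereal_sup [set `|risk PXD Pz b h f - (emp_risk b h xs zs ds f)%:E|%E
                 | f in F])%E.
Proof.
split; last exact: ereal_sup_le (image_subset _ (Fprime_sub F)).
apply: le_anti.
rewrite (ereal_inf_le_tmp (image_subset _ (Fprime_sub F))) andbT.
apply: le_ereal_inf_tmp => _ [f Ff <-]; apply/lee_addgt0Pr => e e_gt0.
have [c le_c] := exists_risk_fix_shift_le PXD Pz (ltW hb) (ltW hh) f e
  (F_meas f Ff) e_gt0.
apply: ge_ereal_inf.
exists (risk PXD Pz b h (fix_shift f c) - risk PXD Pz b h gs)%E.
  by exists (fix_shift f c) => //; exact: fix_shift_Fprime.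
by rewrite [leRHS]addeAC; exact: leeB.
Qed.
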